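(* Let $n\ge1$ and let $\mathfrak{c}=\{c_{ij}\}_{1\le i<j\le n}$, $\mathfrak{\ell}=\{\ell_1,\dots,\ell_n\}$ be integers. If the Grossberg–Karshon twisted cube $(C(\mathfrak{c},\mathfrak{\ell}),\rho)$ is untwisted, then $\ell_i\ge0$ for all $1\le i\le n$.
   Context: $A_n(x)=\ell_n$, $A_j(x)=\ell_j-\sum_{k=j+1}^nc_{jk}x_k$ for $1\le j\le n-1$. $C(\mathfrak{c},\mathfrak{\ell})=\{x\in\mathbb{R}^n:$ for each $1\le k\le n$, $A_k(x)<x_k<0$ or $0\le x_k\le A_k(x)\}$; $\rho(x)=(-1)^n\prod_k\mathrm{sgn}(x_k)$ on $C(\mathfrak{c},\mathfrak{\ell})$, $0$ elsewhere ($\mathrm{sgn}(t)=1$ for $t<0$, $-1$ for $t\ge0$). The twisted cube is untwisted if $C(\mathfrak{c},\mathfrak{\ell})$ is closed in $\mathbb{R}^n$ (equivalently, $C(\mathfrak{c},\mathfrak{\ell})=\{x:0\le x_j\le A_j(x)\ \forall j\}$). *)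

(* R : realType, R^n as 'rV[R]_n with its canonical
   (product/matrix) topology from normedtype. Indices are 0-based ('I_n). *)
From HB Require Import structures.
From mathcomp Require Import all_boot all_order all_algebra.
From mathcomp Require Import all_classical all_reals all_analysis.
Set Implicit Arguments. Unset Strict Implicit. Unset Printing Implicit Defensive.
Import Order.TTheory GRing.Theory Num.Theory.
Import numFieldNormedType.Exports.
Local Open Scope classical_set_scope.
Local Open Scope ring_scope.

Definition twA (R : realType) (n : nat) (c : 'I_n -> 'I_n -> int)
  (l : 'I_n -> int) (j : 'I_n) (x : 'rV[R]_n) : R :=
  (l j)%:~R - \sum_(k < n | (j < k)%N) (c j k)%:~R * x ord0 k.

Definition twC (R : realType) (n : nat) (c : 'I_n -> 'I_n -> int)
  (l : 'I_n -> int) : set 'rV[R]_n :=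
  [set x | forall k : 'I_n,
     (twA c l k x < x ord0 k < 0) \/ (0 <= x ord0 k <= twA c l k x)].

Definition twsgn (R : realType) (t : R) : R := if t < 0 then 1 else -1.

Definition twrho (R : realType) (n : nat) (c : 'I_n -> 'I_n -> int)
  (l : 'I_n -> int) (x : 'rV[R]_n) : R :=
  if `[< twC c l x >] then (-1) ^+ n * \prod_(k < n) twsgn (x ord0 k) else 0.

Definition untwisted (R : realType) (n : nat) (c : 'I_n -> 'I_n -> int)
  (l : 'I_n -> int) : Prop := closed (twC (R:=R) c l).

From HB Require Import structures.
From mathcomp Require Import all_boot all_order all_algebra.
From mathcomp Require Import all_classical all_reals all_analysis.
From mathcomp Require Import lra zify.
Set Implicit Arguments. Unset Strict Implicit. Unset Printing Implicit Defensive.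
Import Order.TTheory GRing.Theory Num.Theory.
Import numFieldNormedType.Exports.
Local Open Scope classical_set_scope.
Local Open Scope ring_scope.

(* If C is closed, it suffices to show that 0 lies in the closure of C: then
   x = 0 satisfies, for every k, either l_k < 0 < 0 (impossible) or
   0 <= 0 <= l_k.  Points of C accumulating at 0 are found on a ray
   t a, t -> 0^-, along which A_k(t a) = l_k + t b_k with b_k depending only
   on the coordinates of a beyond k; so a can be chosen coordinate by
   coordinate from the last one down, picking a_k from the sign of l_k and
   of b_k. *)

Definition twisted_interval (R : realType) (A x : R) : Prop :=
  (A < x < 0) \/ (0 <= x <= A).

Lemma twisted_interval_near0 (R : realType) (m : int) (b : R) :
  exists v : R, \forall t \near 0^'-, twisted_interval (m%:~R + t * b) (t * v).
Proof.
have nb_gt0 : 0 < 1 + `|b| by rewrite ltr_pwDl.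
have e_gt0 : 0 < 1 / (1 + `|b|) by rewrite divr_gt0.
have b_norm : - `|b| <= b <= `|b| by rewrite -ler_norml.
have near_t : \forall t \near 0^'-, - 1 - t < t * b < 1 + t /\ t < 0.
  near=> t.
  have t_lt0 : t < 0 by near: t; exact: nbhs_left_lt.
  have : - (1 / (1 + `|b|)) < t.
    by near: t; apply: nbhs_left_gt; rewrite oppr_lt0.
  rewrite ltrNl ltr_pdivlMr // => t_gt.
  by split => //; apply/andP; split; nra.
have [m_ge1|m_lt1] := lerP 1 m.
  exists 0; apply: filterS near_t => t [/andP[tb_gt tb_lt] t_lt0]; right.
  have : 1 <= m%:~R :> R by rewrite ler1z.
  rewrite mulr0 lexx /=; nra.
have [m_le_1|m_gt_1] := lerP m (-1).
  exists 1; apply: filterS near_t => t [/andP[tb_gt tb_lt] t_lt0]; left.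
  have : m%:~R <= -1 :> R by rewrite -(ler_int R) in m_le_1.
  rewrite mulr1 t_lt0 andbT; nra.
have -> : m = 0 by lia.
have [b_gt0|b_le0] := ltrP 0 b.
  exists (b / 2); apply: filterS near_t => t [_ t_lt0]; left.
  rewrite add0r; apply/andP; split; nra.
exists 0; apply: filterS near_t => t [_ t_lt0]; right.
rewrite add0r mulr0 lexx /=; nra.
Unshelve. all: by end_near.
Qed.

Section TwistedCube.
Variables (R : realType) (n : nat) (c : 'I_n -> 'I_n -> int) (l : 'I_n -> int).

Lemma twA0 k : twA c l k (0 : 'rV[R]_n) = (l k)%:~R.
Proof. by rewrite /twA big1 ?subr0 // => j _; rewrite mxE mulr0. Qed.

Definition twslope (a : 'rV[R]_n) (k : 'I_n) : R :=
  - \sum_(j < n | (k < j)%N) (c k j)%:~R * a ord0 j.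

Lemma twA_scale (a : 'rV[R]_n) k t :
  twA c l k (t *: a) = (l k)%:~R + t * twslope a k.
Proof.
rewrite /twA /twslope mulrN mulr_sumr; congr (_ - _).
by apply: eq_bigr => j _; rewrite mxE mulrCA.
Qed.

Lemma eq_twslope (a a' : 'rV[R]_n) (k : 'I_n) :
  (forall j : 'I_n, (k < j)%N -> a ord0 j = a' ord0 j) ->
  twslope a k = twslope a' k.
Proof. by move=> eq_aa'; congr (- _); apply: eq_bigr => j /eq_aa' ->. Qed.

Lemma twC_ray_tail (m : nat) : (m <= n)%N ->
  exists a : 'rV[R]_n, \forall t \near 0^'-, forall k : 'I_n, (n - m <= k)%N ->
    twisted_interval (twA c l k (t *: a)) ((t *: a) ord0 k).
Proof.
elim: m => [_|m IHm m_lt_n].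
  by exists 0; apply: nearW => t k; rewrite subn0 leqNgt ltn_ord.
have [a near_a] := IHm (ltnW m_lt_n).
have k_lt_n : (n - m.+1 < n)%N by lia.
pose k := Ordinal k_lt_n.
have [v near_v] := twisted_interval_near0 (l k) (twslope a k).
pose a' : 'rV[R]_n := \row_j (if j == k then v else a ord0 j).
have a'_gtk (j : 'I_n) : (k < j)%N -> a' ord0 j = a ord0 j.
  by move=> kj; rewrite mxE; case: eqVneq kj => [->|]; rewrite ?ltnn.
exists a'; apply: filterS2 near_a near_v => t at_a at_v k' le_k'.
rewrite twA_scale mxE.
have [->|ne_k'k] := eqVneq k' k.
  by rewrite mxE eqxx (eq_twslope a'_gtk).
have kk' : (k < k')%N by move: ne_k'k le_k'; rewrite -val_eqE /=; lia.
have a'_gtk' (j : 'I_n) : (k' < j)%N -> a' ord0 j = a ord0 j.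
  by move=> k'j; apply/a'_gtk/(ltn_trans kk').
rewrite (eq_twslope a'_gtk') a'_gtk //.
have k'_ge : (n - m <= k')%N by move: kk' m_lt_n => /=; lia.
by have := at_a k' k'_ge; rewrite twA_scale mxE.
Qed.

Lemma twC_closure0 : closure (twC (R:=R) c l) 0.
Proof.
have [a near_a] := twC_ray_tail (leqnn n).
apply: (@closed_cvg _ _ (0:R)^'- _ (fun t : R => t *: a)).
- exact: closed_closure.
- apply: filterS near_a => t at_t; apply/subset_closure => k.
  by apply: at_t; rewrite subnn.
- rewrite -(scale0r a); apply: cvg_at_left_filter; apply: cvgZr_tmp; exact: cvg_id.
Qed.

Lemma twC0_ge0 : twC (R:=R) c l 0 -> forall i, 0 <= l i.
Proof.
move=> C0 i; have [] := C0 i; rewrite twA0 mxE ?ltxx ?andbF // => /andP[_].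
by rewrite ler0z.
Qed.

End TwistedCube.

Theorem lemma3p1 (R : realType) (n : nat) (c : 'I_n -> 'I_n -> int)
  (l : 'I_n -> int) :
  (1 <= n)%N -> untwisted R c l -> forall i : 'I_n, 0 <= l i.
Proof.
move=> _ C_closed; apply: (@twC0_ge0 R n c l).
by move/closure_id: C_closed => ->; exact: twC_closure0.
Qed.
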